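(* Let $p_1,\dots,p_m$ be complex polynomials and for $z\in\mathbb{D}^*$ let $K_z$ be the semigroup generated by the contractions $f_i:x\mapsto zx+p_i(z)$, $1\le i\le m$. Then there is a regular language $L$ over a finite alphabet of complex numbers such that a power series $e(z)=a_0+a_1z+a_2z^2+\cdots$ is $L$-regular if and only if $e\in\partial K_z$, i.e. $e$ is the function of $z$ given by an infinite composition of the generators $f_i$.
   Context: For a right-infinite sequence $s_1s_2s_3\cdots$ of indices in $\{1,\dots,m\}$, the associated infinite composition is $e(z)=\lim_{n\to\infty}f_{s_1}\circ f_{s_2}\circ\cdots\circ f_{s_n}(x)$, which is independent of $x$ and is a power series in $z$; $\partial K_z$ denotes the set of all such power series. Given a finite alphabet $S\subset\mathbb{C}$ and a prefix-closed regular language $L\subseteq S^*$, let $\overline{L}$ be the set of right-infinite words over $S$ all of whose finite prefixes lie in $L$; a power series $a_0+a_1z+a_2z^2+\cdots$ is called $L$-regular if $(a_0,a_1,a_2,\dots)\in\overline{L}$. *)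

From mathcomp Require Import all_boot all_algebra.
From mathcomp Require Import complex reals.
Set Implicit Arguments. Unset Strict Implicit. Unset Printing Implicit Defensive.
Import GRing.Theory.
Local Open Scope ring_scope.

Record dfa (A : Type) := DFA {
  dfa_state : finType;
  dfa_start : dfa_state;
  dfa_final : pred dfa_state;
  dfa_trans : dfa_state -> A -> dfa_state }.

Definition dfa_accept (A : Type) (d : dfa A) (w : seq A) : bool :=
  @dfa_final A d (foldl (@dfa_trans A d) (@dfa_start A d) w).

Definition regular_lang (A : eqType) (S : seq A) (L : seq A -> Prop) : Prop :=
  exists d : dfa A, forall w, L w <-> (all (mem S) w /\ dfa_accept d w).

Definition prefix_closed (A : Type) (L : seq A -> Prop) : Prop :=
  forall u v : seq A, L (u ++ v) -> L u.

(* Lbar: right-infinite words all of whose finite prefixes lie in L.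
   A power series with coefficient sequence a is L-regular iff a is in Lbar. *)
Definition L_regular (A : Type) (L : seq A -> Prop) (a : nat -> A) : Prop :=
  forall n, L (mkseq a n).

(* Finite composition f_{s_1} o ... o f_{s_n} (x), as a polynomial in z;
   the infinite word s_1 s_2 ... is represented by s : nat -> 'I_m with s_{k+1} = s k. *)
Definition gen_comp (R : realType) (m : nat) (p : 'I_m -> {poly R[i]})
    (s : nat -> 'I_m) (n : nat) (x : R[i]) : {poly R[i]} :=
  foldr (fun i q => 'X * q + p i) x%:P (mkseq s n).

(* e (given by its coefficient sequence a) is the limit (coefficientwise, i.e. in
   the z-adic topology of power series) of f_{s_1} o ... o f_{s_n}(x), for every x. *)
Definition comp_limit (R : realType) (m : nat) (p : 'I_m -> {poly R[i]})
    (s : nat -> 'I_m) (a : nat -> R[i]) : Prop :=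
  forall (x : R[i]) (N : nat), exists n0 : nat, forall n : nat,
    (n0 <= n)%N -> (gen_comp p s n x)`_N = a N.

Definition in_boundary (R : realType) (m : nat) (p : 'I_m -> {poly R[i]})
    (a : nat -> R[i]) : Prop :=
  exists s : nat -> 'I_m, comp_limit p s a.

(* The N-th coefficient of f_{s_1} o ... o f_{s_n}(x) = sum_{k<n} z^k p_{s_{k+1}}(z) + z^n x
   is, as soon as n > N, the number sum_{k<=N} [z^(N-k)] p_{s_{k+1}}; when every p_i has size at
   most d, only the last d+1 letters s_{N-d+1}, ..., s_{N+1} contribute.  So the coefficient
   sequences of the finite compositions are emitted by a finite automaton whose states are these
   windows of letters and which guesses the next letter at each step; its determinisation
   recognises L.  Conversely, if every prefix of a coefficient sequence is emitted along some
   finite path, Koenig's lemma over the finite set of letters yields one infinite path, i.e. an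
   infinite composition with that limit. *)

From Stdlib Require Import Classical ClassicalEpsilon.
From mathcomp Require Import all_boot all_algebra.
From mathcomp Require Import complex reals.
Import GRing.Theory.
Local Open Scope ring_scope.
Set Implicit Arguments. Unset Strict Implicit.

Lemma eq_in_mkseq (T : Type) (f g : nat -> T) n :
  (forall k, (k < n)%N -> f k = g k) -> mkseq f n = mkseq g n.
Proof. by move=> efg; apply/eq_in_map => k; rewrite mem_iota add0n => /efg. Qed.

Lemma take_mkseq (T : Type) (f : nat -> T) k n :
  take k (mkseq f n) = mkseq f (minn k n).
Proof. by rewrite /mkseq -map_take take_iota. Qed.

Lemma koenig (T : finType) (P : seq T -> Prop) :
  (forall u v, P (u ++ v) -> P u) -> (forall n, exists w, size w = n /\ P w) ->
  exists s : nat -> T, forall n, P (mkseq s n).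
Proof.
move=> P_prefix P_long.
pose extendable u := forall n, exists v, size v = n /\ P (u ++ v).
have [t0 _] : exists t : T, True.
  by have [[|t w] [//= _ _]] := P_long 1%N; exists t.
have ext_step u : exists i, extendable u -> extendable (rcons u i).
  have [[i ext_ui]|no_i] := classic (exists i, extendable (rcons u i)); first by exists i.
  exists t0 => ext_u; exfalso.
  (* An extension of [u] longer than every bound [n_ i] would contradict one of them. *)
  have bad_len i : exists n, forall v, size v = n -> ~ P (rcons u i ++ v).
    apply: NNPP => good; apply: no_i; exists i => n.
    apply: NNPP => no_v; apply: good; exists n => v sv Pv; apply: no_v; by exists v.
  have [n_ bad] := fin_all_exists bad_len.
  have [[|i v] [//= [sv] Pv]] := ext_u (\max_i n_ i).+1.
  apply: (bad i (take (n_ i) v)); first by rewrite size_takel // sv leq_bigmax.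
  by apply: (P_prefix _ (drop (n_ i) v)); rewrite -catA cat_take_drop cat_rcons.
have [next next_ext] := @ClassicalEpsilon.choice _ _ _ ext_step.
pose branch n := iter n (fun u => rcons u (next u)) [::].
have branch_ext n : extendable (branch n) by elim: n => [|n /next_ext].
exists (fun n => next (branch n)) => n.
have -> : mkseq (fun n => next (branch n)) n = branch n.
  by elim: n => // n IHn; rewrite mkseqS IHn.
by have [v [/size0nil -> Pv]] := branch_ext n 0%N; rewrite cats0 in Pv.
Qed.

Section IfsAutomaton.

Variables (R : realType) (m : nat) (p : 'I_m -> {poly R[i]}).

Definition word_poly (w : seq 'I_m) : {poly R[i]} := foldr (fun i q => 'X * q + p i) 0 w.

Lemma word_poly_cat u v : word_poly (u ++ v) = word_poly u + 'X^(size u) * word_poly v.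
Proof.
elim: u => [|i u IHu] /=; first by rewrite add0r expr0 mul1r.
by rewrite IHu mulrDr addrAC mulrA -exprS.
Qed.

Lemma word_poly_rcons w i : word_poly (rcons w i) = word_poly w + 'X^(size w) * p i.
Proof. by rewrite -cats1 word_poly_cat /= mulr0 add0r. Qed.

Lemma gen_compE s n x : gen_comp p s n x = word_poly (mkseq s n) + 'X^n * x%:P.
Proof.
rewrite /gen_comp; move: (mkseq s n) (size_mkseq s n) => w <-.
elim: w => [|i w IHw] /=; first by rewrite add0r expr0 mul1r.
by rewrite IHw mulrDr addrAC mulrA -exprS.
Qed.

Lemma coef_word_poly_cat u v N : (N < size u)%N -> (word_poly (u ++ v))`_N = (word_poly u)`_N.
Proof. by move=> ltNu; rewrite word_poly_cat coefD coefXnM ltNu addr0. Qed.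

Lemma coef_word_poly_take k w N : (N < k)%N -> (word_poly (take k w))`_N = (word_poly w)`_N.
Proof.
move=> ltNk; have [lt_kw|le_wk] := ltnP k (size w); last by rewrite take_oversize.
by rewrite -[in RHS](cat_take_drop k w) coef_word_poly_cat // size_takel // ltnW.
Qed.

Lemma coef_gen_comp s n x N : (N < n)%N -> (gen_comp p s n x)`_N = (word_poly (mkseq s n))`_N.
Proof. by move=> ltNn; rewrite gen_compE coefD coefXnM ltNn addr0. Qed.

(* Every composition starting with [w] has these first coefficients. *)
Definition coef_prefix (w : seq 'I_m) : seq R[i] := mkseq (fun N => (word_poly w)`_N) (size w).

Lemma size_coef_prefix w : size (coef_prefix w) = size w.
Proof. exact: size_mkseq. Qed.

Lemma coef_prefix_take k w : coef_prefix (take k w) = take k (coef_prefix w).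
Proof.
rewrite /coef_prefix take_mkseq size_take_min; apply: eq_in_mkseq => N.
by rewrite leq_min => /andP[ltNk _]; rewrite coef_word_poly_take.
Qed.

Lemma comp_limitE s a : comp_limit p s a <-> forall n, coef_prefix (mkseq s n) = mkseq a n.
Proof.
split=> [lim_a n | pre_a x N].
  rewrite /coef_prefix size_mkseq; apply: eq_in_mkseq => N ltNn.
  have [n0 lim_n0] := lim_a 0 N; pose n' := maxn n0 n.
  have le_nn' : (n <= n')%N by rewrite leq_maxr.
  rewrite -(lim_n0 n') ?leq_maxl // coef_gen_comp ?(leq_trans ltNn) //.
  by rewrite -(coef_word_poly_take (mkseq s n') ltNn) take_mkseq (minn_idPl le_nn').
exists N.+1 => n ltNn; rewrite coef_gen_comp //.
by have := congr1 (nth 0 ^~ N) (pre_a n); rewrite /coef_prefix size_mkseq !nth_mkseq.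
Qed.

Lemma exists_branch a : (forall n, exists w, coef_prefix w = mkseq a n) ->
  exists s, forall n, coef_prefix (mkseq s n) = mkseq a n.
Proof.
move=> pre_a.
have [|n|s pre_s] := @koenig _ (fun w => coef_prefix w = mkseq a (size w)).
- move=> u v pre_uv; rewrite -{1}(take_size_cat v (erefl (size u))) coef_prefix_take.
  by rewrite pre_uv take_mkseq size_cat (minn_idPl (leq_addr _ _)).
- have [w pre_w] := pre_a n; exists w.
  by rewrite -(size_coef_prefix w) pre_w size_mkseq.
by exists s => n; rewrite pre_s size_mkseq.
Qed.

Section Window.

Variable d : nat.
Hypothesis size_p : forall i, (size (p i) <= d)%N.

Local Notation window_t := {ffun 'I_d.+1 -> option 'I_m}.

Definition letter_coef (o : option 'I_m) (k : nat) : R[i] :=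
  if o is Some i then (p i)`_k else 0.

Lemma letter_coef_high o k : (d <= k)%N -> letter_coef o k = 0.
Proof. by case: o => [i|] //= le_dk; apply: nth_default; apply: leq_trans (size_p i) le_dk. Qed.

Definition window (w : seq 'I_m) : window_t :=
  [ffun j : 'I_d.+1 => nth None (rev (map Some w)) j].

Definition push (u : window_t) (i : 'I_m) : window_t :=
  [ffun j : 'I_d.+1 => if val j is j'.+1 then u (inord j') else Some i].

Definition window_weight (u : window_t) : R[i] := \sum_(j < d.+1) letter_coef (u j) j.

Lemma window_rcons w i : window (rcons w i) = push (window w) i.
Proof.
apply/ffunP => -[[|j] ltjd]; rewrite !ffunE -cats1 map_cat rev_cat //=.
by rewrite ffunE inordK // ltnW.
Qed.

Lemma push_lift u i (j : 'I_d) : push u i (lift ord0 j) = u (widen_ord (leqnSn d) j).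
Proof. by rewrite ffunE /= add0n; congr (u _); apply/val_inj; rewrite /= inordK // ltnS ltnW. Qed.

Lemma coef_word_poly_tail w e :
  (word_poly w)`_(size w + e) = \sum_(j < d.+1) letter_coef (window w j) (j.+1 + e).
Proof.
elim/last_ind: w e => [|w i IHw] e.
  by rewrite /= coef0 big1 // => j _; rewrite ffunE nth_nil.
rewrite word_poly_rcons coefD coefXnM size_rcons addSnnS IHw ltnNge leq_addr addKn /=.
rewrite big_ord_recr big_ord_recl /= letter_coef_high ?addr0; last first.
  by rewrite addSn ltnW // ltnS leq_addr.
rewrite window_rcons ffunE addrC; congr (_ + _); apply: eq_bigr => j _.
by rewrite push_lift /bump leq0n add1n [in RHS]addSnnS.
Qed.

Lemma coef_word_poly_last w i :
  (word_poly (rcons w i))`_(size w) = window_weight (window (rcons w i)).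
Proof.
rewrite word_poly_rcons coefD coefXnM ltnn subnn -{1}[size w]addn0 coef_word_poly_tail.
rewrite /window_weight big_ord_recr big_ord_recl /= letter_coef_high ?addr0 ?addn0 //.
rewrite window_rcons ffunE addrC; congr (_ + _); apply: eq_bigr => j _.
by rewrite push_lift /bump leq0n add1n addn0.
Qed.

Lemma coef_prefix_rcons w i :
  coef_prefix (rcons w i) = rcons (coef_prefix w) (window_weight (window (rcons w i))).
Proof.
rewrite /coef_prefix size_rcons mkseqS -coef_word_poly_last; congr rcons.
by apply: eq_in_mkseq => N ltNw; rewrite -cats1 coef_word_poly_cat.
Qed.

(* Subset construction: a state is the set of windows reached along the paths that emit
   the word read so far. *)
Definition step (X : {set window_t}) (x : R[i]) : {set window_t} :=
  [set u | [exists v in X, exists i, (u == push v i) && (window_weight u == x)]].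

Definition ifs_dfa : dfa R[i] := DFA [set window [::]] (fun X => X != set0) step.

Lemma mem_reach w u :
  u \in foldl step [set window [::]] w <-> exists l, coef_prefix l = w /\ window l = u.
Proof.
elim/last_ind: w u => [|w x IHw] u.
  rewrite inE; split=> [/eqP->|[l [/(congr1 size)]]]; first by exists [::].
  by rewrite size_coef_prefix => /size0nil-> <-.
rewrite foldl_rcons inE; split.
  case/existsP=> v /andP[/IHw[l [pre_l win_l]] /existsP[i /andP[/eqP-> /eqP wx]]].
  by exists (rcons l i); rewrite coef_prefix_rcons window_rcons pre_l win_l wx.
move=> [l [pre_l <-]]; case/lastP: l pre_l => [|l i].
  by move/(congr1 size); rewrite size_coef_prefix size_rcons.
rewrite coef_prefix_rcons => /rcons_inj[pre_l wx].
apply/existsP; exists (window l); apply/andP; split; first by apply/IHw; exists l.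
by apply/existsP; exists i; rewrite {1}window_rcons eqxx wx eqxx.
Qed.

Lemma ifs_dfa_accept w : dfa_accept ifs_dfa w <-> exists l, coef_prefix l = w.
Proof.
rewrite /dfa_accept /=; split=> [/set0Pn[u /mem_reach[l [pre_l _]]]|[l pre_l]].
  by exists l.
by apply/set0Pn; exists (window l); apply/mem_reach; exists l.
Qed.

Definition alphabet : seq R[i] := codom window_weight.

Lemma coef_prefix_alphabet l : all (mem alphabet) (coef_prefix l).
Proof.
elim/last_ind: l => [//|l i IHl].
by rewrite coef_prefix_rcons all_rcons IHl andbT; apply: codom_f.
Qed.

Definition ifs_lang (w : seq R[i]) : Prop := all (mem alphabet) w /\ dfa_accept ifs_dfa w.

Lemma ifs_langE w : ifs_lang w <-> exists l, coef_prefix l = w.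
Proof.
split=> [[_ /ifs_dfa_accept //]|[l pre_l]].
by split; [rewrite -pre_l; apply: coef_prefix_alphabet | apply/ifs_dfa_accept; exists l].
Qed.

End Window.

End IfsAutomaton.

Theorem proposition4p3p2 (R : realType) (m : nat) (p : 'I_m -> {poly R[i]}) :
  exists (S : seq R[i]) (L : seq R[i] -> Prop),
    [/\ regular_lang S L, prefix_closed L &
        forall a : nat -> R[i], L_regular L a <-> in_boundary p a].
Proof.
pose d := (\max_i size (p i))%N.
have size_p i : (size (p i) <= d)%N by apply: leq_bigmax.
exists (alphabet p d), (ifs_lang p d); split.
- by exists (ifs_dfa p d).
- move=> u v /(ifs_langE size_p)[l pre_l]; apply/(ifs_langE size_p).
  by exists (take (size u) l); rewrite coef_prefix_take pre_l take_size_cat.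
move=> a; split=> [lang_a | [s /comp_limitE pre_s] n].
  have [s pre_s] := exists_branch (fun n => (ifs_langE size_p _).1 (lang_a n)).
  by exists s; apply/comp_limitE.
by apply/(ifs_langE size_p); exists (mkseq s n).
Qed.
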